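(* Let $G$, $k$, $\epsilon$, $M$ be as in the standing setting, and let $V_1$ and $T$ be as defined in the context. Then: (i) every vertex of $V_1$ has exactly one neighbor of degree at least $k-M$, and all its other neighbors have degree $2$; (ii) $V_1$ is a stable set in $G$; (iii) $V_1\cap T=\emptyset$.
   Context: Standing setting: let $0<\epsilon\le 1/20$, $M=6/\epsilon$, and let $k$ be an integer with $k\ge 3/\epsilon^2$ (so $k\ge 3M$). Let $G$ be a finite simple graph with $\Delta(G)\le k$ such that the square of $G$ is not list $(k+1)$-colorable, while the square of every proper subgraph of $G$ is list $(k+1)$-colorable. Here the square of a graph has the same vertex set, two distinct vertices being adjacent iff they are adjacent or have a common neighbor; it is list $(k+1)$-colorable if for every assignment of lists of $k+1$ colors to the vertices there is a proper coloring of the square from the lists. $d(v)$ denotes the degree of $v$ in $G$. Definitions: $V_1$ is the smallest set of vertices of $G$ with the following property: every vertex $u$ with $d(u)\le M-1$ that has $d(u)-1$ neighbors $v_1,\dots,v_{d(u)-1}$, all of degree $2$, such that the other neighbor of each of $v_2,\dots,v_{d(u)-1}$ belongs to $V_1$ and the other neighbor of $v_1$ has degree at most $M-1$ (not necessarily in $V_1$), belongs to $V_1$. $T$ is the set of vertices of degree $2$ both of whose neighbors lie in $V_1$. *)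

(* Graph = symmetric irreflexive relation on a finType. *)
From HB Require Import structures.
From mathcomp Require Import all_boot all_order all_algebra.
Set Implicit Arguments. Unset Strict Implicit. Unset Printing Implicit Defensive.
Import Order.TTheory GRing.Theory Num.Theory.

Section Graphs.
Variable T : finType.

Definition deg (e : rel T) (v : T) : nat := #|[set w | e v w]|.

Definition sq_adj (f : rel T) (x y : T) : bool :=
  (x != y) && (f x y || [exists z, f x z && f z y]).

(* Colors are natural numbers (w.l.o.g., finitely many colors are used). *)
Definition sq_list_colorable (S : {set T}) (f : rel T) (n : nat) : Prop :=
  forall L : T -> seq nat,
    (forall v, v \in S -> uniq (L v) /\ size (L v) = n) ->
    exists c : T -> nat,
      (forall v, v \in S -> c v \in L v) /\
      (forall x y, x \in S -> y \in S -> sq_adj f x y -> c x != c y).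

Definition subgraph (e : rel T) (S : {set T}) (f : rel T) : Prop :=
  symmetric f /\ (forall x y, f x y -> [&& x \in S, y \in S & e x y]).

Definition proper_subgraph (e : rel T) (S : {set T}) (f : rel T) : Prop :=
  subgraph e S f /\ (S != setT \/ exists x y, e x y && ~~ f x y).

Local Open Scope ring_scope.

(* The defining condition of V_1, relative to a candidate set X:
   d(u) <= M-1 and u has d(u)-1 distinct neighbours v_1,...,v_{d(u)-1}
   (listed in s), all of degree 2, such that the other neighbour of v_1 has
   degree <= M-1 and the other neighbour of each of v_2..v_{d(u)-1} is in X. *)
Definition V1_cond (R : realFieldType) (M : R) (e : rel T) (X : {set T}) (u : T)
  : Prop :=
  (deg e u)%:R <= M - 1 /\
  exists s : seq T,
    [/\ uniq s, size s = (deg e u).-1,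
        (forall v, v \in s -> e u v /\ deg e v = 2%N) &
        (if s is v1 :: s' then
           (forall w, e v1 w -> w != u -> (deg e w)%:R <= M - 1) /\
           (forall v, v \in s' -> forall w, e v w -> w != u -> w \in X)
         else True)].

(* V_1 is the smallest set X closed under the condition above:
   u is in V_1 iff u belongs to every such closed set. *)
Definition inV1 (R : realFieldType) (M : R) (e : rel T) (u : T) : Prop :=
  forall X : {set T}, (forall w, V1_cond M e X w -> w \in X) -> u \in X.

Definition inT (R : realFieldType) (M : R) (e : rel T) (v : T) : Prop :=
  deg e v = 2%N /\ (forall w, e v w -> inV1 M e w).

End Graphs.

From HB Require Import structures.
From mathcomp Require Import all_boot all_order all_algebra.
From mathcomp Require Import zify ring lra.
From mathcomp Require Import boolp.
Import Order.TTheory GRing.Theory Num.Theory.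
Set Implicit Arguments. Unset Strict Implicit. Unset Printing Implicit Defensive.

(* The heart of the argument is a reducible configuration: a vertex u with
   (deg u).-1 neighbours of degree 2 (a "hub list" s) such that deg u plus the
   degree of each far end of s is at most k - 2, and deg u plus the degree of
   the remaining neighbour is below k.  Such a u cannot exist: colour the
   square of G - u by minimality (forgetting s), then u, then the vertices of
   s greedily, each having at most k coloured square-neighbours
   (reducible_hub).

   Every vertex of V_1 is light (degree <= M - 1) and is the centre of a hub
   list whose far ends are light (inV1_light_hub).  As k >= 2M + 3, light
   degrees are too small for the configuration, so the remaining neighbour
   must be heavy (degree >= k - M); this gives part (i).  Parts (ii) and (iii)
   follow because heavy and light vertices are far apart in degree. *)

Section SquareColouring.
Variables (V : finType) (e : rel V).

Definition sq_col (L : V -> seq nat) (B : {set V}) (c : V -> nat) : Prop :=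
  (forall x, x \in B -> c x \in L x) /\
  (forall x y, x \in B -> y \in B -> sq_adj e x y -> c x != c y).

Lemma sq_adj_irr x : sq_adj e x x = false.
Proof. by rewrite /sq_adj eqxx. Qed.

Hypothesis e_sym : symmetric e.

Lemma sq_adj_sym : symmetric (sq_adj e).
Proof.
move=> x y; rewrite /sq_adj eq_sym e_sym; congr (_ && (_ || _)).
by apply/existsP/existsP => -[z /andP[h1 h2]]; exists z; rewrite e_sym h2 e_sym h1.
Qed.

Lemma sq_col_add (k : nat) (L : V -> seq nat) (B : {set V}) (c : V -> nat) a :
  uniq (L a) -> size (L a) = k.+1 -> #|[set y in B | sq_adj e a y]| <= k ->
  sq_col L B c -> exists c', sq_col L (a |: B) c'.
Proof.
move=> uL sL hcard [cL cP]; set NB := [set y in B | sq_adj e a y].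
have [col colL colN] :
    exists2 col, col \in L a & col \notin [seq c y | y <- enum NB].
  have [Hall|/allPn //] := boolP (all (mem [seq c y | y <- enum NB]) (L a)).
  have := uniq_leq_size uL (fun x hx => allP Hall x hx).
  by rewrite size_map -cardE sL => /leq_trans /(_ hcard); rewrite ltnn.
have inB x : x \in a |: B -> x != a -> x \in B.
  by case/setU1P => [-> | //]; rewrite eqxx.
have colNB y : y \in B -> sq_adj e a y -> col != c y.
  move=> yB ay; apply: contraNneq colN => ->.
  by apply: map_f; rewrite mem_enum inE yB.
exists (fun x => if x == a then col else c x); split.
  by move=> x /setU1P [-> | xB]; [rewrite eqxx | case: eqP => [->|_]; auto].
move=> x y hx hy hxy.
case: (eqVneq x a) => [xa|xa]; case: (eqVneq y a) => [ya|ya].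
- by move: hxy; rewrite xa ya sq_adj_irr.
- by subst x; exact: colNB (inB _ hy ya) hxy.
- by subst y; rewrite eq_sym; apply: colNB (inB _ hx xa) _; rewrite sq_adj_sym.
- exact: cP (inB _ hx xa) (inB _ hy ya) hxy.
Qed.

Lemma sq_col_greedy (k : nat) (L : V -> seq nat) (l : seq V) :
  (forall a, a \in l -> uniq (L a) /\ size (L a) = k.+1) ->
  (forall a, a \in l -> #|[set y | sq_adj e a y]| <= k) ->
  forall (B : {set V}) (c : V -> nat),
  sq_col L B c -> exists c', sq_col L (B :|: [set x in l]) c'.
Proof.
elim: l => [|a l IH] hL hN B c col.
  by exists c; rewrite (_ : _ :|: _ = B) //; apply/setP=> x; rewrite !inE orbF.
have [uL sL] := hL a (mem_head _ _).
have hc : #|[set y in B | sq_adj e a y]| <= k.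
  apply: leq_trans (hN a (mem_head _ _)); apply: subset_leq_card.
  by apply/subsetP => y; rewrite !inE => /andP[].
have [c1 col1] := sq_col_add uL sL hc col.
have [c' col'] := IH (fun x hx => hL x (mem_behead (s:=a::l) hx))
                     (fun x hx => hN x (mem_behead (s:=a::l) hx)) _ _ col1.
exists c'; rewrite (_ : _ :|: _ = (a |: B) :|: [set x in l]) //.
by apply/setP => x; rewrite !inE; case: (x == a); rewrite ?orbT.
Qed.

Section AllButOneNeighbour.
Variables (u : V) (s : seq V).
Hypotheses (s_uniq : uniq s) (s_size : size s = (deg e u).-1)
           (s_nbr : forall v, v \in s -> e u v).

Lemma card_outside : #|[set w | e u w && (w \notin s)]| = deg e u - (deg e u).-1.
Proof.
rewrite (_ : [set w | _] = [set w | e u w] :\: [set x in s]); last first.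
  by apply/setP => w; rewrite !inE andbC.
rewrite cardsD (_ : _ :&: _ = [set x in s]); last first.
  by apply/setIidPr/subsetP => x; rewrite !inE; exact: s_nbr.
by rewrite (cardsE (mem s)) (card_uniqP s_uniq) s_size.
Qed.

Lemma outside_uniq x y : e u x -> x \notin s -> e u y -> y \notin s -> x = y.
Proof.
move=> ex xs ey ys; apply/eqP; apply: contraT => nxy.
have : #|[set x; y]| <= #|[set w | e u w && (w \notin s)]|.
  apply: subset_leq_card; apply/subsetP => z.
  by rewrite !inE => /orP[]/eqP->; rewrite ?ex ?xs ?ey ?ys.
rewrite cards2 nxy card_outside; lia.
Qed.

Lemma outside_exists : 0 < deg e u -> exists2 w, e u w & w \notin s.
Proof.
move=> d0; have : 0 < #|[set w | e u w && (w \notin s)]|.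
  by rewrite card_outside; lia.
by rewrite card_gt0 => /set0Pn [w]; rewrite inE => /andP[]; exists w.
Qed.

End AllButOneNeighbour.

Definition other_nbr (u z : V) : V := odflt u [pick y | e z y && (y != u)].

Lemma other_nbrP u z : e u z -> deg e z = 2 ->
  [/\ e z (other_nbr u z), other_nbr u z != u &
      forall y, e z y -> y != u -> y = other_nbr u z].
Proof.
move=> ez dz.
have : #|[set w | e z w] :\ u| == 1.
  have := cardsD1 u [set w | e z w]; rewrite inE e_sym ez.
  by move: dz; rewrite /deg => -> /eqP; rewrite add1n eqSS eq_sym.
case/cards1P => x Hx.
have Nz y : e z y -> y != u -> y = x.
  by move=> ey yu; apply/set1P; rewrite -Hx !inE ey yu.
have : x \in [set w | e z w] :\ u by rewrite Hx set11.
rewrite !inE => /andP[xu ezx].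
rewrite /other_nbr; case: pickP => [y /andP[y1 y2] | H] /=.
  by rewrite (Nz y y1 y2).
by have := H x; rewrite /= ezx xu.
Qed.

Lemma card_setU3 (A B C : {set V}) : #|A :|: B :|: C| <= #|A| + #|B| + #|C|.
Proof.
apply: leq_trans (leq_card_setU _ _).1 _; rewrite leq_add2r.
exact: (leq_card_setU _ _).1.
Qed.

(* Square-neighbours of a degree-2 vertex a are neighbours of a or of one of
   its two neighbours. *)
Lemma sq_nbhd_deg2 u a : e u a -> deg e a = 2 ->
  #|[set y | sq_adj e a y]| <= deg e a + deg e u + deg e (other_nbr u a).
Proof.
move=> ea da; have [eo ou ho] := other_nbrP ea da.
move: (other_nbr u a) eo ou ho => x eo ou ho.
apply: leq_trans (card_setU3 [set y | e a y] [set y | e u y] [set y | e x y]).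
apply: subset_leq_card; apply/subsetP => y.
rewrite !inE => /andP[_ /orP[-> //|/existsP[z /andP[eaz ezy]]]].
have [<-|zu] := eqVneq z u; first by rewrite ezy orbT.
by rewrite -(ho z eaz zu) ezy !orbT.
Qed.

(* If all but one neighbour of u lie in a list s of degree-2 vertices, the
   square-neighbours of u outside s are the missing neighbour w, the
   neighbours of w, and the other neighbours of the vertices of s. *)
Lemma sq_nbhd_hub (k : nat) u s :
  uniq s -> size s = (deg e u).-1 ->
  (forall v, v \in s -> e u v /\ deg e v = 2) ->
  (forall w, e u w -> w \notin s -> deg e w + deg e u < k) -> deg e u <= k ->
  #|[set y | (y \notin s) && sq_adj e u y]| <= k.
Proof.
move=> us ss hs hw hd; have s_nbr v : v \in s -> e u v by case/hs.
pose Y := [set other_nbr u z | z in [set x in s]].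
have hY : #|Y| <= deg e u.
  apply: leq_trans (leq_imset_card _ _) _.
  by rewrite (cardsE (mem s)) (card_uniqP us) ss leq_pred.
have incl y : y \notin s -> sq_adj e u y ->
    (e u y \/ exists2 z, e u z & z \notin s /\ e z y) \/ y \in Y.
  move=> ys /andP[yu /orP[euy|/existsP[z /andP[euz ezy]]]]; first by left; left.
  have [zs|zs] := boolP (z \in s); last by left; right; exists z.
  right; apply/imsetP; exists z; first by rewrite inE.
  have [_ _ ho] := other_nbrP (s_nbr z zs) (hs z zs).2.
  by apply: ho; rewrite // eq_sym.
have [w /andP[euw ws] | none] := pickP [pred w | e u w && (w \notin s)].
  have Ww := outside_uniq us ss s_nbr euw ws.
  apply: leq_trans (_ : #|[set w] :|: [set y | e w y] :|: Y| <= k).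
    apply: subset_leq_card; apply/subsetP => y; rewrite inE => /andP[ys ysq].
    case: (incl y ys ysq) => [[euy|[z euz [zs ezy]]]|yY]; rewrite !inE.
    - by rewrite (Ww y euy ys) eqxx.
    - by rewrite (Ww z euz zs) ezy orbT.
    - by rewrite yY !orbT.
  apply: leq_trans (card_setU3 _ _ _) _; rewrite cards1.
  by have := hw w euw ws; rewrite /deg in hY *; lia.
apply: leq_trans hd; apply: leq_trans hY; apply: subset_leq_card.
apply/subsetP => y; rewrite inE => /andP[ys ysq].
case: (incl y ys ysq) => [[euy|[z euz [zs _]]]|//].
  by have := none y; rewrite /= euy ys.
by have := none z; rewrite /= euz zs.
Qed.


Section Minimality.
Variables (k : nat) (L : V -> seq nat).
Hypothesis minimal :
  forall (S : {set V}) (f : rel V), proper_subgraph e S f -> sq_list_colorable S f k.+1.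
Hypothesis L_ok : forall v, uniq (L v) /\ size (L v) = k.+1.

(* Deleting u gives a proper subgraph; on a set B of vertices other than u
   containing at most one neighbour of u, its square agrees with that of e,
   so B can be coloured. *)
Lemma sq_col_delete (u : V) (B : {set V}) :
  u \notin B -> (forall x y, x \in B -> y \in B -> e u x -> e u y -> x = y) ->
  exists c, sq_col L B c.
Proof.
move=> uB Bu; pose f := [rel x y | e x y && (x != u) && (y != u)].
have pf : proper_subgraph e (setT :\ u) f.
  split; [split|].
  - move=> x y /=; rewrite e_sym.
    by case: (x != u); case: (y != u); rewrite ?andbF ?andbT.
  - by move=> x y /= /andP[/andP[exy xu] yu]; rewrite !inE xu yu exy.
  - by left; apply/eqP => /setP /(_ u); rewrite !inE eqxx.
have [c [cL cP]] := minimal pf (fun v _ => L_ok v).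
have notu x : x \in B -> x != u by apply: contraTneq => ->.
have inS x : x \in B -> x \in setT :\ u by move=> xB; rewrite !inE notu.
exists c; split=> [x xB|x y xB yB]; first exact/cL/inS.
move=> /andP[nxy /orP[exy|/existsP[z /andP[exz ezy]]]].
  by apply: cP (inS _ xB) (inS _ yB) _; rewrite /sq_adj nxy /= exy (notu _ xB) (notu _ yB).
have [zu|zu] := eqVneq z u.
  by move: nxy; rewrite (Bu x y) ?eqxx // -?zu // e_sym.
apply: cP (inS _ xB) (inS _ yB) _; rewrite /sq_adj nxy /=; apply/orP; right.
by apply/existsP; exists z; rewrite exz ezy zu (notu _ xB) (notu _ yB).
Qed.

End Minimality.

(* The reducible configuration: if every proper subgraph has a list
   (k+1)-colourable square, a vertex u all but one of whose neighbours have
   degree 2 (listed in s), with enough room around them, makes the square of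
   the whole graph list (k+1)-colourable: colour the vertices other than u and
   s, then u, then s greedily. *)
Lemma reducible_hub (k : nat) (u : V) (s : seq V) :
  (forall (S : {set V}) (f : rel V), proper_subgraph e S f ->
     sq_list_colorable S f k.+1) ->
  uniq s -> size s = (deg e u).-1 ->
  (forall v, v \in s -> e u v /\ deg e v = 2) ->
  (forall v, v \in s -> forall w, e v w -> w != u -> deg e u + deg e w + 2 <= k) ->
  (forall w, e u w -> w \notin s -> deg e w + deg e u < k) ->
  deg e u <= k ->
  sq_list_colorable setT e k.+1.
Proof.
move=> minimal us ss hs hx hw hd L HL.
have L_ok v : uniq (L v) /\ size (L v) = k.+1 by exact: HL.
have s_nbr v : v \in s -> e u v by case/hs.
pose B0 := [set x | (x != u) && (x \notin s)].
have [c0 col0] : exists c, sq_col L B0 c.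
  apply: (sq_col_delete minimal L_ok (u := u)); first by rewrite inE eqxx.
  move=> x y; rewrite !inE => /andP[_ xs] /andP[_ ys] ex ey.
  exact: (outside_uniq us ss s_nbr ex xs ey ys).
have hub : #|[set y in B0 | sq_adj e u y]| <= k.
  apply: leq_trans (sq_nbhd_hub us ss hs hw hd); apply: subset_leq_card.
  by apply/subsetP => y; rewrite !inE => /andP[/andP[_ ->]].
have [c1 col1] := sq_col_add (L_ok u).1 (L_ok u).2 hub col0.
have spoke a : a \in s -> #|[set y | sq_adj e a y]| <= k.
  move=> a_s; have [ea da] := hs a a_s; have [eo ou _] := other_nbrP ea da.
  apply: leq_trans (sq_nbhd_deg2 ea da) _.
  by have := hx a a_s _ eo ou; rewrite da; lia.
have [c [cL cP]] := sq_col_greedy (fun a _ => L_ok a) spoke col1.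
have all_in x : x \in (u |: B0) :|: [set x in s].
  by rewrite !inE; case: (x == u); case: (x \in s).
by exists c; split => [x _|x y _ _]; [apply: cL | apply: cP].
Qed.

End SquareColouring.

Local Open Scope ring_scope.

Section V1Structure.
Variables (R : realFieldType) (M : R) (V : finType) (e : rel V).

Definition light : {set V} := [set w | (deg e w)%:R <= M - 1].

Lemma V1_cond_mono (X Y : {set V}) u :
  X \subset Y -> V1_cond M e X u -> V1_cond M e Y u.
Proof.
move=> /subsetP XY [du [s [us ss hs hif]]]; split=> //; exists s; split=> //.
by case: s hif {us ss hs} => // v1 s' [h1 h2]; split=> // v vs w ew wu; exact/XY/(h2 v vs w ew wu).
Qed.

Lemma V1_cond_light (X : {set V}) u : V1_cond M e X u -> u \in light.
Proof. by case; rewrite inE. Qed.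

(* V_1 is contained in the closed set of light vertices, so every u in V_1
   satisfies the defining condition with V_1 replaced by the light vertices. *)
Lemma inV1_cond_light u : inV1 M e u -> V1_cond M e light u.
Proof.
move=> hu; pose X := [set w | `[< V1_cond M e light w >]].
have XL : X \subset light.
  by apply/subsetP => w; rewrite inE => /asboolP /V1_cond_light.
suff : u \in X by rewrite inE => /asboolP.
apply: hu => w hw; rewrite inE; apply/asboolP; exact: V1_cond_mono XL hw.
Qed.

Definition light_hub (u : V) (s : seq V) : Prop :=
  [/\ uniq s, size s = (deg e u).-1, (forall v, v \in s -> e u v /\ deg e v = 2%N),
      (forall v, v \in s -> forall w, e v w -> w != u -> w \in light) &
      u \in light].

Lemma inV1_light_hub u : inV1 M e u -> exists s, light_hub u s.
Proof.
move=> /inV1_cond_light [du [s [us ss hs hif]]]; exists s; split; rewrite ?inE //.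
case: s hif {us ss hs} => // v1 s' [h1 h2] v.
by rewrite inE => /predU1P [-> w ew wu| vs]; [rewrite inE; exact: h1 | exact: h2].
Qed.

Section MinimalCounterexample.
Variable k : nat.
Hypotheses (e_sym : symmetric e) (deg_le_k : forall v, (deg e v <= k)%N)
           (not_colourable : ~ sq_list_colorable setT e k.+1)
           (minimal : forall (S : {set V}) (f : rel V), proper_subgraph e S f ->
                        sq_list_colorable S f k.+1)
           (k_large : 2 * M + 3 <= k%:R).

Lemma light_heavy_gap v w :
  v \in light -> k%:R - M <= (deg e w)%:R -> (deg e v + 4 <= deg e w)%N.
Proof. by rewrite inE -(ler_nat R) natrD => lv hw; move: k_large; lra. Qed.

(* By reducibility, every neighbour of a light hub outside its list is heavy
   (and there is one). *)
Lemma light_hub_heavy u s : light_hub u s ->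
  (0 < deg e u)%N /\ forall w, e u w -> w \notin s -> k%:R - M <= (deg e w)%:R.
Proof.
move=> [us ss hs hsw]; rewrite inE => lu; have kM := k_large.
have red := reducible_hub e_sym minimal us ss hs.
have room v : v \in s -> forall w, e v w -> w != u -> (deg e u + deg e w + 2 <= k)%N.
  move=> vs w ew wu; have := hsw v vs w ew wu; rewrite inE => lw.
  by rewrite -(ler_nat R) !natrD; lra.
have s_nbr v : v \in s -> e u v by case/hs.
split.
  rewrite lt0n; apply/negP => /eqP d0; apply: not_colourable.
  apply: red room _ (deg_le_k u) => w euw; exfalso.
  by move: d0; rewrite /deg => /eqP; rewrite cards_eq0 => /eqP/setP/(_ w); rewrite !inE euw.
move=> w euw ws; case: leP => // small; exfalso; apply: not_colourable.
apply: red room _ (deg_le_k u) => w' euw' ws'.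
by rewrite (outside_uniq us ss s_nbr euw' ws' euw ws) -(ltr_nat R) natrD; lra.
Qed.

Lemma V1_heavy_nbr u : inV1 M e u ->
  exists s w0, [/\ light_hub u s, e u w0, w0 \notin s,
                   k%:R - M <= (deg e w0)%:R &
                   forall w, e u w -> w \notin s -> w = w0].
Proof.
move=> /inV1_light_hub [s hub]; have [d0 heavy] := light_hub_heavy hub.
have [us ss hs _ _] := hub; have s_nbr v : v \in s -> e u v by case/hs.
have [w0 ew0 w0s] := outside_exists us ss s_nbr d0.
exists s, w0; split; auto => w ew ws; exact: (outside_uniq us ss s_nbr ew ws ew0 w0s).
Qed.

Lemma V1_nbrs u : inV1 M e u ->
  exists w0, [/\ e u w0, k%:R - M <= (deg e w0)%:R,
    (forall w, e u w -> k%:R - M <= (deg e w)%:R -> w = w0) &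
    (forall w, e u w -> w != w0 -> deg e w = 2%N)].
Proof.
move=> /V1_heavy_nbr [s [w0 [[_ _ hs _ lu] ew0 w0s hw0 only]]].
exists w0; split=> // w ew.
  move=> hw; apply: only ew _; apply/negP => ws.
  by have := light_heavy_gap lu hw; rewrite (hs w ws).2; lia.
move=> ww0; have [ws|ws] := boolP (w \in s); first exact: (hs w ws).2.
by rewrite (only w ew ws) eqxx in ww0.
Qed.

(* Part (ii): V_1 is a stable set.  A neighbour v of u in V_1 is light, so
   it lies in the hub list of u; then its heavy neighbour is neither u nor
   its other neighbour, both light. *)
Lemma V1_stable u v : inV1 M e u -> inV1 M e v -> ~~ e u v.
Proof.
move=> hu hv; apply/negP => euv.
have [s [w [[_ _ _ hsw lu] _ _ hw only]]] := V1_heavy_nbr hu.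
have [t [w0 [[_ _ _ _ lv] ew0 _ hw0 _]]] := V1_heavy_nbr hv.
have [vs|vs] := boolP (v \in s); last first.
  by rewrite -(only v euv vs) in hw; have := light_heavy_gap lv hw; lia.
have [w0u|w0u] := eqVneq w0 u.
  by have := light_heavy_gap lu hw0; rewrite w0u; lia.
by have := light_heavy_gap (hsw v vs w0 ew0 w0u) hw0; lia.
Qed.

(* Part (iii): V_1 and T are disjoint, since a vertex of T has a neighbour
   in V_1 while V_1 is stable. *)
Lemma V1_not_T v : inV1 M e v -> ~ inT M e v.
Proof.
move=> hv [_ hT]; have [w0 [ew0 _ _ _]] := V1_nbrs hv.
by have := V1_stable hv (hT w0 ew0); rewrite ew0.
Qed.

End MinimalCounterexample.
End V1Structure.

(* With M = 6/eps and eps <= 1/20, the bound k >= 3/eps^2 gives k >= 2M + 3: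
   for t = 1/eps >= 20 we have 3 t^2 >= 12 t + 3. *)
Lemma large_k (R : realFieldType) (eps : R) (k : nat) :
  0 < eps -> eps <= 1 / 20%:R -> 3%:R / eps ^+ 2 <= k%:R ->
  2 * (6%:R / eps) + 3 <= k%:R.
Proof.
move=> eps_gt0 eps_small; rewrite -exprVn.
have t_ge20 : 20 <= eps^-1.
  have : eps * 20 <= 1 by rewrite -ler_pdivlMr // mul1r in eps_small *; lra.
  have : eps * eps^-1 = 1 by rewrite mulfV // gt_eqF.
  have : 0 < eps^-1 by rewrite invr_gt0.
  nra.
set t := eps^-1 in t_ge20 *; rewrite expr2 => kt.
have -> : 2 * (6%:R / eps) + 3 = 12 * t + 3 by rewrite /t; ring.
nra.
Qed.

Theorem lemma3 (R : realFieldType) (eps : R) (k : nat) (V : finType) (e : rel V) :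
  0 < eps -> eps <= 1 / 20%:R ->
  3%:R / eps ^+ 2 <= k%:R ->
  symmetric e -> irreflexive e ->
  (forall v, (deg e v <= k)%N) ->
  ~ sq_list_colorable setT e k.+1 ->
  (forall (S : {set V}) (f : rel V), proper_subgraph e S f ->
     sq_list_colorable S f k.+1) ->
  let M := 6%:R / eps in
  [/\ (forall u, inV1 M e u ->
         exists w0, [/\ e u w0, k%:R - M <= (deg e w0)%:R,
           (forall w, e u w -> k%:R - M <= (deg e w)%:R -> w = w0) &
           (forall w, e u w -> w != w0 -> deg e w = 2%N)]),
      (forall u v, inV1 M e u -> inV1 M e v -> ~~ e u v) &
      (forall v, inV1 M e v -> ~ inT M e v)].
Proof.
move=> eps_gt0 eps_small k_ge e_sym _ deg_le_k not_colourable minimal M.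
have k_large : 2 * M + 3 <= k%:R by exact: large_k.
split.
- exact: V1_nbrs k_large.
- exact: V1_stable k_large.
- exact: V1_not_T k_large.
Qed.
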